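(* Assume Hypotheses 1, 2 and 3 (see context). For each $x\in\Gamma$, the set $T(x)$ is a linear subspace of $X$.
   Context: System $\dot x=F(x)$ with $F=(f,g)$, i.e. $\dot a=f(a,z)$, $\dot z=g(a,z)$, $(a,z)\in\mathbb{R}^n\times\mathbb{R}^m$, $X=\mathbb{R}^n\times\mathbb{R}^m$, flow $\Phi(t,x)$. Euclidean inner product, norm, operator norm. $\mathcal{L}(x_1,x_2)=\|a_2-a_1\|^2-\|z_2-z_1\|^2$, $\mathcal{C}(x)=\{x'\in X:\mathcal{L}(x',x)\ge0\}$, $\mathbf{0}$ the zero vector of $X$; $\Pi(a,z)=a$, $\Pi_\perp(a,z)=z$; $\mathbb{B}_d(x)=\{(a',z'):\|a'-a\|\le d,\|z'-z\|\le d\}$. $\Gamma\subseteq U$ positively invariant means $\Phi(t,x)$ is defined for all $t\ge0$ for $x\in\Gamma$ and $\Phi(t,\Gamma)\subseteq\Gamma$. Hypothesis 1: $U$ open and convex, and there is $d>0$ with $\mathcal{C}(x)\cap U\subset\mathbb{B}_d(x)$ for all $x\in U$. Hypothesis 2: $f,g$ are $C^1$ on $U$; there exist continuous $\alpha>0$, $\ell\ge0$ on $U$ and $c_1>0$ with, for all $x\in U$: $\langle a',D_af(x)a'\rangle\ge\alpha(x)\|a'\|^2$; $\langle z',D_zg(x)z'\rangle\le\ell(x)\|z'\|^2$; $\alpha(x)\ge\ell(x)+\|D_zf(x)\|+\|D_ag(x)\|+c_1$. Hypothesis 3: $\Gamma\subset U$ is positively invariant and $\Pi_\perp(\Gamma)=\Pi_\perp(U)$.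 For $x\in\Gamma$, $Q(t,x)$ ($t\ge0$) denotes the fundamental matrix solution of the variational equation $\dot{\mathbf{x}}=DF(\Phi(t,x))\mathbf{x}$ with $Q(0,x)=I$. For $x\in\Gamma$, $T(x):=\{\mathbf{x}\in X: \mathcal{L}(Q(t,x)\mathbf{x},\mathbf{0})\le0\text{ for all }t\ge0\}$. *)

From Stdlib Require Import Reals ClassicalEpsilon.
From mathcomp Require Import ssreflect ssrfun ssrbool eqtype ssrnat fintype bigop.

Set Implicit Arguments.
Unset Strict Implicit.

Local Open Scope R_scope.

Definition vec (k : nat) := 'I_k -> R.
Definition vzero (k : nat) : vec k := fun _ => 0.
Definition vadd k (u v : vec k) : vec k := fun i => u i + v i.
Definition vsub k (u v : vec k) : vec k := fun i => u i - v i.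
Definition vscale k (c : R) (u : vec k) : vec k := fun i => c * u i.
Definition dot k (u v : vec k) : R := \big[Rplus/0]_(i < k) (u i * v i).
Definition vnorm k (u : vec k) : R := sqrt (dot u u).

Definition mat (l k : nat) := 'I_l -> 'I_k -> R.
Definition mapp l k (A : mat l k) (v : vec k) : vec l :=
  fun i => \big[Rplus/0]_(j < k) (A i j * v j).
Definition opnorm l k (A : mat l k) : R :=
  epsilon (inhabits 0)
    (is_lub (fun y => exists v : vec k, vnorm v <= 1 /\ y = vnorm (mapp A v))).

Definition X (n m : nat) := (vec n * vec m)%type.
Definition xzero n m : X n m := (@vzero n, @vzero m).
Definition xadd n m (x y : X n m) : X n m := (vadd x.1 y.1, vadd x.2 y.2).
Definition xsub n m (x y : X n m) : X n m := (vsub x.1 y.1, vsub x.2 y.2).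
Definition xscale n m (c : R) (x : X n m) : X n m := (vscale c x.1, vscale c x.2).
Definition xnorm n m (x : X n m) : R := sqrt (dot x.1 x.1 + dot x.2 x.2).
Definition Pi n m (x : X n m) : vec n := x.1.
Definition Pi_perp n m (x : X n m) : vec m := x.2.

Definition Lfun n m (x1 x2 : X n m) : R :=
  (vnorm (vsub x2.1 x1.1))^2 - (vnorm (vsub x2.2 x1.2))^2.
Definition Ccone n m (x : X n m) : X n m -> Prop := fun x' => Lfun x' x >= 0.
Definition Bbox n m (d : R) (x : X n m) : X n m -> Prop :=
  fun x' => vnorm (vsub x'.1 x.1) <= d /\ vnorm (vsub x'.2 x.2) <= d.

Definition is_open n m (U : X n m -> Prop) : Prop :=
  forall x, U x -> exists r, 0 < r /\ forall y, xnorm (xsub y x) < r -> U y.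
Definition is_convex n m (U : X n m -> Prop) : Prop :=
  forall x y, U x -> U y -> forall t, 0 <= t <= 1 ->
    U (xadd (xscale (1 - t) x) (xscale t y)).

Definition cont_on n m (U : X n m -> Prop) (phi : X n m -> R) : Prop :=
  forall x, U x -> forall eps, 0 < eps -> exists delta, 0 < delta /\
    forall y, U y -> xnorm (xsub y x) < delta -> Rabs (phi y - phi x) < eps.

Definition Fvf n m (f : vec n -> vec m -> vec n) (g : vec n -> vec m -> vec m)
  (x : X n m) : X n m := (f x.1 x.2, g x.1 x.2).

Definition DFapp n m (Daf : X n m -> mat n n) (Dzf : X n m -> mat n m)
  (Dag : X n m -> mat m n) (Dzg : X n m -> mat m m) (y h : X n m) : X n m :=
  (vadd (mapp (Daf y) h.1) (mapp (Dzf y) h.2),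
   vadd (mapp (Dag y) h.1) (mapp (Dzg y) h.2)).

(* f, g are C^1 on U, with partial Jacobians D_a f, D_z f, D_a g, D_z g:
   F is Frechet differentiable at every point of U with derivative given by the
   block matrix, and all entries of the blocks are continuous on U. *)
Definition C1_with_derivs n m (U : X n m -> Prop)
  (f : vec n -> vec m -> vec n) (g : vec n -> vec m -> vec m)
  (Daf : X n m -> mat n n) (Dzf : X n m -> mat n m)
  (Dag : X n m -> mat m n) (Dzg : X n m -> mat m m) : Prop :=
  (forall x, U x -> forall eps, 0 < eps -> exists delta, 0 < delta /\
     forall h, xnorm h < delta ->
       xnorm (xsub (xsub (Fvf f g (xadd x h)) (Fvf f g x))
                   (DFapp Daf Dzf Dag Dzg x h)) <= eps * xnorm h) /\
  (forall i j, cont_on U (fun y => Daf y i j)) /\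
  (forall i j, cont_on U (fun y => Dzf y i j)) /\
  (forall i j, cont_on U (fun y => Dag y i j)) /\
  (forall i j, cont_on U (fun y => Dzg y i j)).

Definition Hyp1 n m (U : X n m -> Prop) : Prop :=
  is_open U /\ is_convex U /\
  exists d, 0 < d /\ forall x, U x -> forall x', Ccone x x' -> U x' -> Bbox d x x'.

Definition Hyp2 n m (U : X n m -> Prop)
  (f : vec n -> vec m -> vec n) (g : vec n -> vec m -> vec m)
  (Daf : X n m -> mat n n) (Dzf : X n m -> mat n m)
  (Dag : X n m -> mat m n) (Dzg : X n m -> mat m m)
  (alpha ell : X n m -> R) (c1 : R) : Prop :=
  C1_with_derivs U f g Daf Dzf Dag Dzg /\
  cont_on U alpha /\ cont_on U ell /\ 0 < c1 /\
  (forall x, U x -> 0 < alpha x /\ 0 <= ell x) /\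
  (forall x, U x -> forall a' : vec n,
      dot a' (mapp (Daf x) a') >= alpha x * (vnorm a')^2) /\
  (forall x, U x -> forall z' : vec m,
      dot z' (mapp (Dzg x) z') <= ell x * (vnorm z')^2) /\
  (forall x, U x ->
      alpha x >= ell x + opnorm (Dzf x) + opnorm (Dag x) + c1).

Definition is_forward_flow n m (Gamma : X n m -> Prop)
  (f : vec n -> vec m -> vec n) (g : vec n -> vec m -> vec m)
  (Phi : R -> X n m -> X n m) : Prop :=
  forall x, Gamma x ->
    Phi 0 x = x /\
    (forall eps, 0 < eps -> exists delta, 0 < delta /\
        forall s, 0 <= s < delta -> xnorm (xsub (Phi s x) x) < eps) /\
    (forall t, 0 < t ->
       (forall i, derivable_pt_lim (fun s => (Phi s x).1 i) t
                    (f (Phi t x).1 (Phi t x).2 i)) /\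
       (forall j, derivable_pt_lim (fun s => (Phi s x).2 j) t
                    (g (Phi t x).1 (Phi t x).2 j))).

Definition Hyp3 n m (U Gamma : X n m -> Prop)
  (f : vec n -> vec m -> vec n) (g : vec n -> vec m -> vec m)
  (Phi : R -> X n m -> X n m) : Prop :=
  (forall x, Gamma x -> U x) /\
  is_forward_flow Gamma f g Phi /\
  (forall x, Gamma x -> forall t, 0 <= t -> Gamma (Phi t x)) /\
  (forall z : vec m, (exists x, U x /\ Pi_perp x = z) <->
                     (exists x, Gamma x /\ Pi_perp x = z)).

Definition is_linear_map n m (A : X n m -> X n m) : Prop :=
  (forall u v, A (xadd u v) = xadd (A u) (A v)) /\
  (forall c u, A (xscale c u) = xscale c (A u)).

(* Q(t,x) (t >= 0, x in Gamma) is the fundamental matrix solution of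
   d/dt Q = DF(Phi(t,x)) Q, Q(0) = I: for t >= 0, Q(t,x) is linear, Q(0,x) = id,
   and for every initial vector v, t |-> Q(t,x) v is right-continuous at 0 and
   solves the variational equation on (0, +oo). *)
Definition is_fundamental_matrix n m (Gamma : X n m -> Prop)
  (Daf : X n m -> mat n n) (Dzf : X n m -> mat n m)
  (Dag : X n m -> mat m n) (Dzg : X n m -> mat m m)
  (Phi : R -> X n m -> X n m) (Q : R -> X n m -> X n m -> X n m) : Prop :=
  forall x, Gamma x ->
    (forall t, 0 <= t -> is_linear_map (Q t x)) /\
    (forall v, Q 0 x v = v) /\
    (forall v,
       (forall eps, 0 < eps -> exists delta, 0 < delta /\
          forall s, 0 <= s < delta -> xnorm (xsub (Q s x v) v) < eps) /\
       (forall t, 0 < t ->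
          (forall i, derivable_pt_lim (fun s => (Q s x v).1 i) t
                       ((DFapp Daf Dzf Dag Dzg (Phi t x) (Q t x v)).1 i)) /\
          (forall j, derivable_pt_lim (fun s => (Q s x v).2 j) t
                       ((DFapp Daf Dzf Dag Dzg (Phi t x) (Q t x v)).2 j)))).

Definition Tset n m (Q : R -> X n m -> X n m -> X n m) (x : X n m) : X n m -> Prop :=
  fun v => forall t, 0 <= t -> Lfun (Q t x v) (xzero n m) <= 0.

Definition is_subspace n m (S : X n m -> Prop) : Prop :=
  S (xzero n m) /\
  (forall u v, S u -> S v -> S (xadd u v)) /\
  (forall c u, S u -> S (xscale c u)).

(* Write gap(a, z) = |a|^2 - |z|^2, so that T(x) is the set of initial vectors
   whose variational solution never enters the open cone gap > 0.  Closure
   under scaling and 0 follow from linearity of Q(t,x) and gap(c y) = c^2 gap(y).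
   For the sum w = u + v of u, v in T(x):
   - the cone gap > 0 is forward invariant, because Hypothesis 2 makes the
     derivative of gap positive inside it ([cone_invariant]);
   - inside the cone |a_w|^2 grows at relative rate >= 2(l + |D_a g| + c1),
     outside it |z_u|^2 and |z_v|^2 grow at relative rate <= 2(l + |D_a g|)
     ([EnergyEstimates]); a real-variable comparison ([growth_beats_domination])
     shows |a_w|^2 eventually exceeds 2(|z_u|^2 + |z_v|^2), which is impossible
     since |a_u + a_v|^2 <= 2|a_u|^2 + 2|a_v|^2 <= 2(|z_u|^2 + |z_v|^2).
   This handles t > 0 ([sum_stays_outside]); t = 0 follows by right-continuity
   ([gap_nonpos_at_start]). *)
From Pilot Require Import Defs.
From HB Require Import structures.
From Stdlib Require Import Reals Lra Psatz Classical ClassicalEpsilon FunctionalExtensionality.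
From mathcomp Require Import ssreflect ssrfun ssrbool eqtype ssrnat fintype seq bigop.

Set Implicit Arguments.
Unset Strict Implicit.
Local Open Scope R_scope.

(* Real addition is a commutative monoid law distributed over by multiplication,
   so the generic bigop lemmas (big_split, big_distrr, bigD1, ...) apply to the
   sums \big[Rplus/0] used in Defs. *)
HB.instance Definition _ :=
  Monoid.isComLaw.Build R 0 Rplus (fun x y z => esym (Rplus_assoc x y z)) Rplus_comm Rplus_0_l.
HB.instance Definition _ := Monoid.isMulLaw.Build R 0 Rmult Rmult_0_l Rmult_0_r.
HB.instance Definition _ :=
  Monoid.isAddLaw.Build R Rmult Rplus Rmult_plus_distr_r Rmult_plus_distr_l.

Lemma sum_le (I : Type) (r : seq I) (F G : I -> R) :
  (forall i, F i <= G i) -> \big[Rplus/0]_(i <- r) F i <= \big[Rplus/0]_(i <- r) G i.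
Proof. by move=> FG; apply: (big_ind2 Rle) => //; [lra | move=> *; lra]. Qed.

Lemma sum_ge0 (I : Type) (r : seq I) (P : pred I) (F : I -> R) :
  (forall i, P i -> 0 <= F i) -> 0 <= \big[Rplus/0]_(i <- r | P i) F i.
Proof. by move=> F0; apply: (big_ind (Rle 0)) => //; [lra | move=> *; lra]. Qed.

Lemma sum_derivable (I : Type) (r : seq I) (F : I -> R -> R) (F' : I -> R) t :
  (forall i, derivable_pt_lim (F i) t (F' i)) ->
  derivable_pt_lim (fun s => \big[Rplus/0]_(i <- r) F i s) t (\big[Rplus/0]_(i <- r) F' i).
Proof.
move=> dF; elim: r => [|i r IH].
  rewrite big_nil; apply: (derivable_pt_lim_ext (fun _ => 0)).
    by move=> s; rewrite big_nil.
  exact: derivable_pt_lim_const.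
rewrite big_cons; apply: (derivable_pt_lim_ext (fun s => F i s + \big[Rplus/0]_(j <- r) F j s)).
  by move=> s; rewrite big_cons.
exact: derivable_pt_lim_plus.
Qed.

Lemma dot_addl k (u v w : vec k) : dot (vadd u v) w = dot u w + dot v w.
Proof. by rewrite /dot -big_split /=; apply: eq_bigr => i _; rewrite /vadd; ring. Qed.

Lemma dot_addr k (u v w : vec k) : dot u (vadd v w) = dot u v + dot u w.
Proof. by rewrite /dot -big_split /=; apply: eq_bigr => i _; rewrite /vadd; ring. Qed.

Lemma dot_scalel k c (u v : vec k) : dot (vscale c u) v = c * dot u v.
Proof. by rewrite /dot big_distrr /=; apply: eq_bigr => i _; rewrite /vscale; ring. Qed.

Lemma dot_scaler k c (u v : vec k) : dot u (vscale c v) = c * dot u v.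
Proof. by rewrite /dot big_distrr /=; apply: eq_bigr => i _; rewrite /vscale; ring. Qed.

Lemma dot_sym k (u v : vec k) : dot u v = dot v u.
Proof. by apply: eq_bigr => i _; ring. Qed.

Lemma dot_self_ge0 k (u : vec k) : 0 <= dot u u.
Proof. by apply: sum_ge0 => i _; nra. Qed.

Lemma vnorm_sq k (u : vec k) : vnorm u ^ 2 = dot u u.
Proof. exact/pow2_sqrt/dot_self_ge0. Qed.

Lemma vnorm_ge0 k (u : vec k) : 0 <= vnorm u.
Proof. exact: sqrt_pos. Qed.

Lemma dot_sub_self k (u v : vec k) :
  dot (vsub u v) (vsub u v) = dot u u - 2 * dot u v + dot v v.
Proof.
rewrite /dot (eq_bigr (fun i => u i * u i + (-2 * (u i * v i) + v i * v i))).
  by rewrite !big_split /= -big_distrr /=; ring.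
by move=> i _; rewrite /vsub; ring.
Qed.

Lemma dot_self_eq0 k (u : vec k) : dot u u = 0 -> forall i, u i = 0.
Proof.
move=> u0 i; move: u0; rewrite /dot (bigD1 i) //=.
set rest := \big[Rplus/0]_(_ < _ | _) _.
have rest0 : 0 <= rest by apply: sum_ge0 => j _; nra.
move=> sum0; have : u i * u i = 0 by nra.
by case/Rmult_integral.
Qed.

(* Expand 0 <= | |v| u - |u| v |^2. *)
Lemma cauchy_schwarz k (u v : vec k) : dot u v <= vnorm u * vnorm v.
Proof.
have [a0 | a0] := Req_dec (vnorm u) 0.
  have u0 : forall i, u i = 0 by apply: dot_self_eq0; rewrite -vnorm_sq a0; ring.
  rewrite a0 /dot big1 => [|i _]; [lra | by rewrite u0; ring].
have [b0 | b0] := Req_dec (vnorm v) 0.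
  have v0 : forall i, v i = 0 by apply: dot_self_eq0; rewrite -vnorm_sq b0; ring.
  rewrite b0 /dot big1 => [|i _]; [lra | by rewrite v0; ring].
have := dot_self_ge0 (vsub (vscale (vnorm v) u) (vscale (vnorm u) v)).
rewrite dot_sub_self !dot_scalel !dot_scaler -!vnorm_sq.
have ab : 0 < vnorm u * vnorm v.
  by apply: Rmult_lt_0_compat; have := vnorm_ge0 u; have := vnorm_ge0 v; lra.
nra.
Qed.

Lemma cauchy_schwarz_abs k (u v : vec k) : Rabs (dot u v) <= vnorm u * vnorm v.
Proof.
apply: Rabs_le; split; last exact: cauchy_schwarz.
have := cauchy_schwarz u (vscale (-1) v).
rewrite dot_scaler /vnorm dot_scalel dot_scaler.
have -> : -1 * (-1 * dot v v) = dot v v by ring.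
lra.
Qed.

Lemma mapp_scale l k (A : mat l k) c (v : vec k) :
  mapp A (vscale c v) = vscale c (mapp A v).
Proof.
apply: functional_extensionality => i; rewrite /mapp /vscale big_distrr /=.
by apply: eq_bigr => j _; ring.
Qed.

Lemma vnorm_scale k c (v : vec k) : 0 <= c -> vnorm (vscale c v) = c * vnorm v.
Proof.
move=> c0; rewrite /vnorm dot_scalel dot_scaler -Rmult_assoc sqrt_mult_alt; last nra.
by rewrite sqrt_square.
Qed.

(* A crude a priori bound (Frobenius norm), showing that the set defining
   [opnorm] is bounded. *)
Lemma vnorm_mapp_frobenius l k (A : mat l k) (v : vec k) :
  vnorm (mapp A v) <= sqrt (\big[Rplus/0]_(i < l) dot (A i) (A i)) * vnorm v.
Proof.
rewrite /vnorm -sqrt_mult_alt; last by apply: sum_ge0 => i _; apply: dot_self_ge0.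
apply: sqrt_le_1_alt; rewrite {1}/dot big_distrl /=; apply: sum_le => i.
have := cauchy_schwarz_abs (A i) v; rewrite /mapp -/(dot (A i) v) -!vnorm_sq.
have := Rle_abs (dot (A i) v); have := Rle_abs (- dot (A i) v); rewrite Rabs_Ropp.
have := vnorm_ge0 (A i); have := vnorm_ge0 v; nra.
Qed.

Definition unit_image l k (A : mat l k) (y : R) : Prop :=
  exists v : vec k, vnorm v <= 1 /\ y = vnorm (mapp A v).

Lemma vnorm_zero k : vnorm (@vzero k) = 0.
Proof. by rewrite /vnorm /dot big1 ?sqrt_0 // => i _; rewrite /vzero; ring. Qed.

Lemma opnorm_lub l k (A : mat l k) : is_lub (unit_image A) (opnorm A).
Proof.
apply: (epsilon_spec (inhabits 0) (is_lub (unit_image A))).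
have bounded : bound (unit_image A).
  exists (sqrt (\big[Rplus/0]_(i < l) dot (A i) (A i))) => _ [v [v1 ->]].
  apply: Rle_trans (vnorm_mapp_frobenius A v) _.
  have := sqrt_pos (\big[Rplus/0]_(i < l) dot (A i) (A i)); nra.
have inhabited : exists y, unit_image A y.
  exists (vnorm (mapp A (@vzero k))), (@vzero k); rewrite vnorm_zero; split => //; lra.
by have [y lub] := completeness _ bounded inhabited; exists y.
Qed.

Lemma opnorm_ge0 l k (A : mat l k) : 0 <= opnorm A.
Proof.
apply: Rle_trans (vnorm_ge0 (mapp A (@vzero k))) _; apply: (proj1 (opnorm_lub A)).
by exists (@vzero k); rewrite vnorm_zero; split => //; lra.
Qed.

(* The defining property of the operator norm, by rescaling v to the unit ball. *)
Lemma opnorm_bound l k (A : mat l k) (v : vec k) :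
  vnorm (mapp A v) <= opnorm A * vnorm v.
Proof.
have [v0 | v0] := Req_dec (vnorm v) 0.
  have := vnorm_mapp_frobenius A v; rewrite v0 Rmult_0_r => Av0.
  by have := opnorm_ge0 A; have := vnorm_ge0 (mapp A v); nra.
have vpos : 0 < / vnorm v by apply: Rinv_0_lt_compat; have := vnorm_ge0 v; lra.
have unit : unit_image A (/ vnorm v * vnorm (mapp A v)).
  exists (vscale (/ vnorm v) v); rewrite mapp_scale !vnorm_scale; try lra.
  by rewrite Rinv_l //; split => //; lra.
have bound := proj1 (opnorm_lub A) _ unit.
apply: (Rmult_le_reg_l (/ vnorm v)) => //.
by rewrite -Rmult_assoc (Rmult_comm _ (opnorm A)) Rmult_assoc Rinv_l // Rmult_1_r.
Qed.

Lemma coupling_bound k l (p : vec k) (B : mat k l) (q : vec l) :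
  Rabs (dot p (mapp B q)) <= opnorm B * vnorm p * vnorm q.
Proof.
apply: Rle_trans (cauchy_schwarz_abs p (mapp B q)) _.
have := opnorm_bound B q; have := vnorm_ge0 p; nra.
Qed.

Lemma stays_above_start (h h' : R -> R) a :
  (forall t, a <= t -> derivable_pt_lim h t (h' t)) ->
  (forall t, a <= t -> h a <= h t -> 0 < h' t) ->
  forall b, a <= b -> h a <= h b.
Proof.
move=> dh pos b ab.
have cont t : a <= t <= b -> continuity_pt h t.
  by move=> [ta _]; apply: derivable_continuous_pt; exists (h' t); apply: dh.
have [M [maxM [aM Mb]]] := continuity_ab_maj h a b ab cont.
have haM : h a <= h M by apply: maxM; lra.
have [<- | Mb'] := Req_dec M b; first exact: haM.
have hpos : 0 < h' M / 2 by have := pos M aM haM; lra.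
have [del near] := dh M aM _ hpos.
set e := Rmin (del / 2) (b - M).
have e_pos : 0 < e by apply: Rmin_pos; have := cond_pos del; lra.
have e_del : e <= del / 2 := Rmin_l _ _.
have e_b : e <= b - M := Rmin_r _ _.
have quot := near e ltac:(lra) ltac:(rewrite Rabs_right; have := cond_pos del; lra).
have drop : (h (M + e) - h M) / e <= 0.
  have : h (M + e) <= h M by apply: maxM; lra.
  by have := Rinv_0_lt_compat e e_pos; rewrite /Rdiv; nra.
by have := Rabs_def2 _ _ quot; lra.
Qed.

Lemma sq_norm_derivable k (F : R -> vec k) (F' : vec k) t :
  (forall i, derivable_pt_lim (fun s => F s i) t (F' i)) ->
  derivable_pt_lim (fun s => dot (F s) (F s)) t (2 * dot (F t) F').
Proof.
move=> dF; have -> : 2 * dot (F t) F' =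
    \big[Rplus/0]_(i < k) (F' i * F t i + F t i * F' i).
  by rewrite /dot big_distrr /=; apply: eq_bigr => i _; ring.
apply: (@sum_derivable _ _ (fun i s => F s i * F s i)) => i.
exact: derivable_pt_lim_mult.
Qed.

Definition gap n m (y : X n m) : R := dot y.1 y.1 - dot y.2 y.2.

Lemma Lfun_zero n m (y : X n m) : Lfun y (xzero n m) = gap y.
Proof.
rewrite /Lfun !vnorm_sq /gap /dot /vsub /xzero /vzero /=.
by congr (_ - _); apply: eq_bigr => i _; ring.
Qed.

Lemma gap_scale n m c (y : X n m) : gap (xscale c y) = c ^ 2 * gap y.
Proof. by rewrite /gap /= !dot_scalel !dot_scaler; ring. Qed.

Lemma dot_subl k (u v w : vec k) : dot (vsub u v) w = dot u w - dot v w.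
Proof.
rewrite /dot (eq_bigr (fun i => u i * w i + -1 * (v i * w i))).
  by rewrite big_split /= -big_distrr /=; ring.
by move=> i _; rewrite /vsub; ring.
Qed.

Lemma sq_norm_near k (u u0 : vec k) :
  Rabs (dot u u - dot u0 u0) <= vnorm (vsub u u0) * (2 * vnorm u0 + vnorm (vsub u u0)).
Proof.
set d := vsub u u0.
have -> : dot u u - dot u0 u0 = dot d d + 2 * dot d u0.
  by rewrite /d dot_sub_self dot_subl; ring.
apply: Rle_trans (Rabs_triang _ _) _.
rewrite Rabs_right; last exact/Rle_ge/dot_self_ge0.
rewrite Rabs_mult Rabs_right; last lra.
have := cauchy_schwarz_abs d u0; have := vnorm_ge0 d; rewrite -vnorm_sq; nra.
Qed.

Lemma vnorm_fst_le n m (y : X n m) : vnorm y.1 <= xnorm y.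
Proof. by apply: sqrt_le_1_alt; have := dot_self_ge0 y.2; lra. Qed.

Lemma vnorm_snd_le n m (y : X n m) : vnorm y.2 <= xnorm y.
Proof. by apply: sqrt_le_1_alt; have := dot_self_ge0 y.1; lra. Qed.

Lemma gap_continuous n m (y0 : X n m) eps : 0 < eps ->
  exists delta, 0 < delta /\
    forall y, xnorm (xsub y y0) < delta -> Rabs (gap y - gap y0) < eps.
Proof.
move=> eps0; set K := 2 * vnorm y0.1 + 2 * vnorm y0.2 + 2.
have K0 : 0 < K by have := vnorm_ge0 y0.1; have := vnorm_ge0 y0.2; rewrite /K; lra.
exists (Rmin 1 (eps / K)); split.
  by apply: Rmin_pos; [lra | apply: Rdiv_lt_0_compat].
move=> y near; have d1 := Rmin_l 1 (eps / K); have d2 := Rmin_r 1 (eps / K).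
set d := xnorm (xsub y y0) in near.
have component k (u u0 : vec k) : vnorm (vsub u u0) <= d ->
    Rabs (dot u u - dot u0 u0) <= d * (2 * vnorm u0 + 1).
  move=> ud; apply: Rle_trans (sq_norm_near u u0) _.
  by have := vnorm_ge0 (vsub u u0); have := vnorm_ge0 u0; nra.
have := component _ _ _ (vnorm_fst_le (xsub y y0)).
have := component _ _ _ (vnorm_snd_le (xsub y y0)).
have dK : d * K < eps.
  by apply: (Rlt_le_trans _ (eps / K * K)); [nra | right; field; lra].
have -> : gap y - gap y0 =
  (dot y.1 y.1 - dot y0.1 y0.1) + - (dot y.2 y.2 - dot y0.2 y0.2) by rewrite /gap; ring.
have := Rabs_triang (dot y.1 y.1 - dot y0.1 y0.1) (- (dot y.2 y.2 - dot y0.2 y0.2)).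
rewrite Rabs_Ropp /K /= in dK *; lra.
Qed.

Lemma gap_nonpos_at_start n m (y : R -> X n m) (y0 : X n m) :
  (forall eps, 0 < eps -> exists delta, 0 < delta /\
     forall s, 0 <= s < delta -> xnorm (xsub (y s) y0) < eps) ->
  (forall t, 0 < t -> gap (y t) <= 0) -> gap y0 <= 0.
Proof.
move=> right_cont outside; apply: Rnot_lt_le => inside.
have [delta [delta0 near]] := gap_continuous y0 inside.
have [delta' [delta'0 close]] := right_cont _ delta0.
have := near _ (close (delta' / 2) ltac:(lra)).
have := outside (delta' / 2) ltac:(lra).
by move=> ? /Rabs_def2; lra.
Qed.

Lemma affine_derivable r c t0 s :
  derivable_pt_lim (fun s => r * (1 + c * (s - t0))) s (r * c).
Proof.
apply: (derivable_pt_lim_ext (fun s => r * c * s + r * (1 - c * t0))).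
  by move=> s'; ring.
have := derivable_pt_lim_plus _ _ s _ _
  (derivable_pt_lim_scal id (r * c) s 1 (derivable_pt_lim_id s))
  (derivable_pt_lim_const (r * (1 - c * t0)) s).
by rewrite Rmult_1_r Rplus_0_r.
Qed.

(* Comparison of growth rates: a positive quantity P growing at relative rate
   at least 2(E + c) cannot stay below a quantity Z growing at relative rate
   at most 2E.  (The ratio P/Z would grow at least linearly; we compare P with
   Z times a linear function to avoid dividing.) *)
Lemma growth_beats_domination (P Z P' Z' E : R -> R) c t0 :
  0 < c -> 0 < P t0 ->
  (forall s, t0 <= s -> derivable_pt_lim P s (P' s)) ->
  (forall s, t0 <= s -> derivable_pt_lim Z s (Z' s)) ->
  (forall s, t0 <= s -> 0 <= E s) ->
  (forall s, t0 <= s -> 2 * (E s + c) * P s <= P' s) ->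
  (forall s, t0 <= s -> Z' s <= 2 * E s * Z s) ->
  exists s, t0 <= s /\ Z s < P s.
Proof.
move=> c0 P0 dP dZ E0 P'_lb Z'_ub; apply: NNPP => never.
have dominated s : t0 <= s -> P s <= Z s.
  by move=> ts; apply: Rnot_lt_le => ZP; apply: never; exists s.
have P_grows : forall s, t0 <= s -> P t0 <= P s.
  apply: (stays_above_start dP) => s ts Ps.
  by have := P'_lb s ts; have := E0 s ts; nra.
have Z_pos s : t0 <= s -> 0 < Z s.
  by move=> ts; have := P_grows s ts; have := dominated s ts; lra.
have Z0 := Z_pos t0 (Rle_refl _).
set R0 := P t0 / Z t0.
have R0_pos : 0 < R0 by apply: Rdiv_lt_0_compat.
pose lin s := R0 * (1 + c * (s - t0)).
pose K s := P s - Z s * lin s.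
have K0 : K t0 = 0 by rewrite /K /lin /R0; field; lra.
have K_grows : forall s, t0 <= s -> K t0 <= K s.
  apply: (@stays_above_start K (fun s => P' s - (Z' s * lin s + Z s * (R0 * c)))).
    move=> s ts; apply: (derivable_pt_lim_minus P (fun s => Z s * lin s)).
      exact: dP.
    exact: (derivable_pt_lim_mult Z lin s _ _ (dZ s ts) (affine_derivable R0 c t0 s)).
  move=> s ts; rewrite K0 /K => Zlin_P.
  have lin_R0 : R0 <= lin s.
    have : 0 <= c * (s - t0) by apply: Rmult_le_pos; lra.
    by rewrite /lin; nra.
  have Zs := Z_pos s ts; have Es := E0 s ts.
  have := Rmult_le_compat_r (lin s) _ _ ltac:(lra) (Z'_ub s ts).
  have : 0 <= (E s + c) * (P s - Z s * lin s) by apply: Rmult_le_pos; lra.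
  have : 0 <= c * Z s * (lin s - R0) by apply: Rmult_le_pos; [nra | lra].
  have : 0 < c * Z s * R0 by apply: Rmult_lt_0_compat; [nra | lra].
  have := P'_lb s ts; nra.
pose s1 := t0 + / (R0 * c).
have s1_t0 : t0 <= s1 by have := Rinv_0_lt_compat (R0 * c) ltac:(nra); rewrite /s1; lra.
have lin1 : lin s1 = R0 + 1 by rewrite /lin /s1; field; lra.
have := K_grows s1 s1_t0; rewrite K0 /K lin1.
by have := dominated s1 s1_t0; have := Z_pos s1 s1_t0; nra.
Qed.

Lemma dot_add_self_le k (u v : vec k) :
  dot (vadd u v) (vadd u v) <= 2 * dot u u + 2 * dot v v.
Proof.
have := dot_self_ge0 (vsub u v); rewrite dot_sub_self !dot_addl !dot_addr.
by rewrite (dot_sym v u); lra.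
Qed.

Section EnergyEstimates.
Variables (n m : nat) (A : mat n n) (B : mat n m) (C : mat m n) (D : mat m m).
Variables (al el c : R) (p : vec n) (q : vec m).
Hypothesis coercive : dot p (mapp A p) >= al * vnorm p ^ 2.
Hypothesis dissipative : dot q (mapp D q) <= el * vnorm q ^ 2.
Hypothesis spectral_gap : al >= el + opnorm B + opnorm C + c.
Hypothesis el0 : 0 <= el.
Hypothesis c0 : 0 < c.

Lemma a_rate_lower :
  2 * (al * vnorm p ^ 2 - opnorm B * vnorm p * vnorm q) <=
  2 * (dot p (mapp A p) + dot p (mapp B q)).
Proof.
have := Rle_abs (- dot p (mapp B q)); rewrite Rabs_Ropp.
have := coupling_bound p B q; lra.
Qed.

Lemma z_rate_upper :
  2 * (dot q (mapp C p) + dot q (mapp D q)) <=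
  2 * (el * vnorm q ^ 2 + opnorm C * vnorm p * vnorm q).
Proof.
have := Rle_abs (dot q (mapp C p)); have := coupling_bound q C p; lra.
Qed.

Lemma a_rate_inside_cone : dot q q <= dot p p ->
  2 * (el + opnorm C + c) * dot p p <= 2 * (dot p (mapp A p) + dot p (mapp B q)).
Proof.
move=> /sqrt_le_1_alt qp; rewrite -vnorm_sq; have := a_rate_lower.
have := opnorm_ge0 B; have := vnorm_ge0 q.
have : opnorm B * vnorm p * vnorm q <= opnorm B * vnorm p * vnorm p.
  by apply: Rmult_le_compat_l => //; apply: Rmult_le_pos; [apply: opnorm_ge0 | apply: vnorm_ge0].
nra.
Qed.

Lemma z_rate_outside_cone : dot p p <= dot q q ->
  2 * (dot q (mapp C p) + dot q (mapp D q)) <= 2 * (el + opnorm C) * dot q q.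
Proof.
move=> /sqrt_le_1_alt pq; rewrite -vnorm_sq; have := z_rate_upper.
have : opnorm C * vnorm p * vnorm q <= opnorm C * vnorm q * vnorm q.
  by apply: Rmult_le_compat_r; [apply: vnorm_ge0 | apply: Rmult_le_compat_l => //; apply: opnorm_ge0].
nra.
Qed.

Lemma gap_rate_pos : dot q q < dot p p ->
  0 < 2 * (dot p (mapp A p) + dot p (mapp B q)) - 2 * (dot q (mapp C p) + dot q (mapp D q)).
Proof.
move=> qp; have a_rate := a_rate_inside_cone (Rlt_le _ _ qp).
have z_rate := z_rate_upper; rewrite -vnorm_sq in a_rate.
have /sqrt_lt_1_alt qp' : 0 <= dot q q < dot p p by have := dot_self_ge0 q; lra.
rewrite -/(vnorm q) -/(vnorm p) in qp'.
have q0 := vnorm_ge0 q; have C0 := opnorm_ge0 C.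
have : opnorm C * vnorm p * vnorm q <= opnorm C * vnorm p * vnorm p.
  by apply: Rmult_le_compat_l; [apply: Rmult_le_pos => //; exact: vnorm_ge0 | lra].
have : el * vnorm q ^ 2 <= el * vnorm p ^ 2 by apply: Rmult_le_compat_l => //; nra.
have : 0 < c * vnorm p ^ 2 by apply: Rmult_lt_0_compat => //; nra.
lra.
Qed.
End EnergyEstimates.

(* A linear time-dependent system a' = A a + B z, z' = C a + D z on t > 0 whose
   coefficients satisfy Hypothesis 2 at every time (in the application these
   are the blocks of DF along a trajectory of the flow). *)
Section ConeDynamics.
Variables (n m : nat) (A : R -> mat n n) (B : R -> mat n m).
Variables (C : R -> mat m n) (D : R -> mat m m) (al el : R -> R) (c : R).
Hypothesis c0 : 0 < c.
Hypothesis el0 : forall s, 0 < s -> 0 <= el s.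
Hypothesis spectral_gap :
  forall s, 0 < s -> al s >= el s + opnorm (B s) + opnorm (C s) + c.
Hypothesis coercive :
  forall s, 0 < s -> forall p, dot p (mapp (A s) p) >= al s * vnorm p ^ 2.
Hypothesis dissipative :
  forall s, 0 < s -> forall q, dot q (mapp (D s) q) <= el s * vnorm q ^ 2.

Definition solution (y : R -> X n m) : Prop :=
  forall t, 0 < t ->
    (forall i, derivable_pt_lim (fun s => (y s).1 i) t
                 (vadd (mapp (A t) (y t).1) (mapp (B t) (y t).2) i)) /\
    (forall j, derivable_pt_lim (fun s => (y s).2 j) t
                 (vadd (mapp (C t) (y t).1) (mapp (D t) (y t).2) j)).

Lemma a_energy_derivable y t : solution y -> 0 < t ->
  derivable_pt_lim (fun s => dot (y s).1 (y s).1) t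
    (2 * (dot (y t).1 (mapp (A t) (y t).1) + dot (y t).1 (mapp (B t) (y t).2))).
Proof.
by move=> sol t0; have [da _] := sol t t0; rewrite -dot_addr; apply: sq_norm_derivable.
Qed.

Lemma z_energy_derivable y t : solution y -> 0 < t ->
  derivable_pt_lim (fun s => dot (y s).2 (y s).2) t
    (2 * (dot (y t).2 (mapp (C t) (y t).1) + dot (y t).2 (mapp (D t) (y t).2))).
Proof.
by move=> sol t0; have [_ dz] := sol t t0; rewrite -dot_addr; apply: sq_norm_derivable.
Qed.

Lemma cone_invariant y t0 : solution y -> 0 < t0 -> 0 < gap (y t0) ->
  forall s, t0 <= s -> gap (y t0) <= gap (y s).
Proof.
move=> sol t0_pos inside.
apply: (@stays_above_start (fun s => gap (y s)) (fun s =>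
    2 * (dot (y s).1 (mapp (A s) (y s).1) + dot (y s).1 (mapp (B s) (y s).2)) -
    2 * (dot (y s).2 (mapp (C s) (y s).1) + dot (y s).2 (mapp (D s) (y s).2))))
  => s ts; have s0 : 0 < s by lra.
  apply: (derivable_pt_lim_minus (fun s => dot (y s).1 (y s).1)
                                 (fun s => dot (y s).2 (y s).2)).
    exact: a_energy_derivable.
  exact: z_energy_derivable.
move=> above.
apply: (gap_rate_pos (coercive s0 _) (dissipative s0 _) (spectral_gap s0) (el0 s0) c0).
by rewrite /gap in above inside; lra.
Qed.

(* A solution entering the cone
   would grow its a-component at rate 2(el + |C| + c), while the z-components
   of the two others, which dominate it, grow at rate at most 2(el + |C|). *)
Lemma sum_stays_outside yu yv yw :
  solution yu -> solution yv -> solution yw ->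
  (forall s, 0 < s -> (yw s).1 = vadd (yu s).1 (yv s).1) ->
  (forall s, 0 < s -> gap (yu s) <= 0) -> (forall s, 0 < s -> gap (yv s) <= 0) ->
  forall t, 0 < t -> gap (yw t) <= 0.
Proof.
move=> solu solv solw sum_a outu outv t0 t0_pos; apply: Rnot_lt_le => inside.
have in_cone s : t0 <= s -> dot (yw s).2 (yw s).2 <= dot (yw s).1 (yw s).1.
  by move=> ts; have := cone_invariant solw t0_pos inside ts; rewrite /gap in inside *; lra.
have outside_rate y s : solution y -> t0 <= s -> gap (y s) <= 0 ->
    2 * (dot (y s).2 (mapp (C s) (y s).1) + dot (y s).2 (mapp (D s) (y s).2)) <=
    2 * (el s + opnorm (C s)) * dot (y s).2 (y s).2.
  move=> _ ts out; have s0 : 0 < s by lra.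
  by apply: (z_rate_outside_cone _ (dissipative s0 _)); rewrite /gap in out; lra.
have [s [ts ZP]] : exists s, t0 <= s /\
    2 * (dot (yu s).2 (yu s).2 + dot (yv s).2 (yv s).2) < dot (yw s).1 (yw s).1.
  apply: (@growth_beats_domination (fun s => dot (yw s).1 (yw s).1)
    (fun s => 2 * (dot (yu s).2 (yu s).2 + dot (yv s).2 (yv s).2))
    (fun s => 2 * (dot (yw s).1 (mapp (A s) (yw s).1) + dot (yw s).1 (mapp (B s) (yw s).2)))
    (fun s => 2 * (2 * (dot (yu s).2 (mapp (C s) (yu s).1) + dot (yu s).2 (mapp (D s) (yu s).2)) +
                   2 * (dot (yv s).2 (mapp (C s) (yv s).1) + dot (yv s).2 (mapp (D s) (yv s).2))))
    (fun s => el s + opnorm (C s)) c t0 c0).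
  - by have := dot_self_ge0 (yw t0).2; rewrite /gap in inside; lra.
  - by move=> s ts; apply: (a_energy_derivable solw); lra.
  - move=> s ts; apply: derivable_pt_lim_scal; apply: (derivable_pt_lim_plus
      (fun s => dot (yu s).2 (yu s).2) (fun s => dot (yv s).2 (yv s).2));
      apply: z_energy_derivable => //; lra.
  - by move=> s ts; have := @el0 s ltac:(lra); have := opnorm_ge0 (C s); lra.
  - move=> s ts; have s0 : 0 < s by lra.
    exact: (a_rate_inside_cone (coercive s0 _) (spectral_gap s0) (in_cone s ts)).
  - move=> s ts; have := outside_rate yu s solu ts (outu s ltac:(lra)).
    by have := outside_rate yv s solv ts (outv s ltac:(lra)); lra.
have := dot_add_self_le (yu s).1 (yv s).1; rewrite -sum_a; last lra.
by have := outu s ltac:(lra); have := outv s ltac:(lra); rewrite /gap; lra.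
Qed.
End ConeDynamics.

Lemma linear_gap_zero n m (L : X n m -> X n m) :
  is_linear_map L -> gap (L (xzero n m)) = 0.
Proof.
move=> [_ hom]; have zero : xzero n m = xscale 0 (xzero n m).
  by rewrite /xscale /xzero /vscale /vzero /=; congr pair;
     apply: functional_extensionality => i; ring.
by rewrite zero hom gap_scale; ring.
Qed.

(* Main theorem: the flow data enters only through the linear system along the
   trajectory t |-> Phi(t,x), to which [sum_stays_outside] applies. *)
Theorem lemma2p7 (n m : nat) (U Gamma : X n m -> Prop)
  (f : vec n -> vec m -> vec n) (g : vec n -> vec m -> vec m)
  (Daf : X n m -> mat n n) (Dzf : X n m -> mat n m)
  (Dag : X n m -> mat m n) (Dzg : X n m -> mat m m)
  (alpha ell : X n m -> R) (c1 : R)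
  (Phi : R -> X n m -> X n m) (Q : R -> X n m -> X n m -> X n m) :
  Hyp1 U ->
  Hyp2 U f g Daf Dzf Dag Dzg alpha ell c1 ->
  Hyp3 U Gamma f g Phi ->
  is_fundamental_matrix Gamma Daf Dzf Dag Dzg Phi Q ->
  forall x, Gamma x -> is_subspace (Tset Q x).
Proof.
move=> _ [_ [_ [_ [c0 [pos [coer [diss spec]]]]]]] [GU [_ [Ginv _]]] HQ x Gx.
have [lin [Q0 Qsol]] := HQ x Gx.
have onU s : 0 < s -> U (Phi s x) by move=> s0; apply: GU; apply: Ginv => //; lra.
have in_T v : Tset Q x v -> forall s, 0 < s -> gap (Q s x v) <= 0.
  by move=> Tv s s0; rewrite -Lfun_zero; apply: Tv; lra.
have sum_outside u v : Tset Q x u -> Tset Q x v ->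
    forall t, 0 < t -> gap (Q t x (xadd u v)) <= 0.
  move=> Tu Tv; apply: (sum_stays_outside (A := fun s => Daf (Phi s x))
    (B := fun s => Dzf (Phi s x)) (C := fun s => Dag (Phi s x))
    (D := fun s => Dzg (Phi s x)) (al := fun s => alpha (Phi s x))
    (el := fun s => ell (Phi s x)) c0) (in_T u Tu) (in_T v Tv).
  - by move=> s s0; case: (pos _ (onU s s0)).
  - by move=> s s0; apply: spec; apply: onU.
  - by move=> s s0; apply: coer; apply: onU.
  - by move=> s s0; apply: diss; apply: onU.
  - exact: (proj2 (Qsol u)).
  - exact: (proj2 (Qsol v)).
  - exact: (proj2 (Qsol (xadd u v))).
  - by move=> s s0; rewrite (proj1 (lin s _)) //; lra.
split; [|split] => [t t0 | u v Tu Tv t t0 | c v Tv t t0]; rewrite Lfun_zero.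
- by rewrite linear_gap_zero //; [lra | apply: lin].
- have [t_pos | <-] := Rle_lt_or_eq_dec 0 t t0; first exact: sum_outside.
  rewrite Q0; apply: (gap_nonpos_at_start (proj1 (Qsol (xadd u v)))).
  exact: sum_outside.
- rewrite (proj2 (lin t t0)) gap_scale.
  by have := Tv t t0; rewrite Lfun_zero; have := pow2_ge_0 c; nra.
Qed.
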